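(* There exist constants $K_1,K_2>0$ (independent of $h$ and of the grid function) such that for every grid function $v\in\mathbb{V}_h$, \[ \|\nabla_hv\|_{l^4}\le K_1\|\nabla_hv\|^{1/2}\Big(2\|\Delta_hv\|^2+\frac{1}{L^2}\|\nabla_hv\|^2\Big)^{1/4} \] and \[ \|\nabla_hv\|_{l^6}\le K_2\|\nabla_hv\|^{1/3}\Big(16\|\Delta_hv\|^2+\frac{1}{L^2}\|\nabla_hv\|^2\Big)^{1/3}. \]
   Context: $L>0$, $M$ a positive integer, $h=L/M$, $\Omega_h=\{(ih,jh):1\le i,j\le M\}$, $\mathbb{V}_h$ the grid functions on $\{(ih,jh):0\le i,j\le M\}$ that are $L$-periodic in each direction. $\Delta_x v_{ij}=(v_{i+1,j}-v_{i-1,j})/(2h)$, $\Delta_yv_{ij}=(v_{i,j+1}-v_{i,j-1})/(2h)$, $\nabla_hv=(\Delta_xv,\Delta_yv)^T$, $\delta_x^2v_{ij}=(v_{i+1,j}-2v_{ij}+v_{i-1,j})/h^2$, similarly $\delta_y^2$, $\Delta_h=\delta_x^2+\delta_y^2$. $\|v\|^2=h^2\sum_{\Omega_h}v_h^2$, $\|\nabla_hv\|_{l^q}=(h^2\sum_{\Omega_h}|\nabla_hv_h|^q)^{1/q}$ with $|\cdot|$ Euclidean, $\|\nabla_hv\|=\|\nabla_hv\|_{l^2}$. *)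

From HB Require Import structures.
From mathcomp Require Import all_boot all_order all_algebra.
From mathcomp Require Import reals exp.
Set Implicit Arguments. Unset Strict Implicit. Unset Printing Implicit Defensive.
Import Order.TTheory GRing.Theory Num.Theory.
Local Open Scope ring_scope.

Section GridDefs.
Variable R : realType.

(* Grid functions are indexed by integers (i,j) <-> point (ih, jh);
   L-periodicity in each direction = M-periodicity of the indices. *)
Definition periodic (M : nat) (v : int -> int -> R) : Prop :=
  forall i j : int, v (i + M%:Z) j = v i j /\ v i (j + M%:Z) = v i j.

Definition Dx (h : R) (v : int -> int -> R) (i j : int) : R :=
  (v (i + 1) j - v (i - 1) j) / (2 * h).
Definition Dy (h : R) (v : int -> int -> R) (i j : int) : R :=
  (v i (j + 1) - v i (j - 1)) / (2 * h).
Definition d2x (h : R) (v : int -> int -> R) (i j : int) : R :=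
  (v (i + 1) j - 2 * v i j + v (i - 1) j) / (h ^+ 2).
Definition d2y (h : R) (v : int -> int -> R) (i j : int) : R :=
  (v i (j + 1) - 2 * v i j + v i (j - 1)) / (h ^+ 2).
Definition lap_h (h : R) (v : int -> int -> R) (i j : int) : R :=
  d2x h v i j + d2y h v i j.

Definition gridsum (M : nat) (F : int -> int -> R) : R :=
  \sum_(1 <= i < M.+1) \sum_(1 <= j < M.+1) F (i%:Z) (j%:Z).

Definition l2norm (h : R) (M : nat) (f : int -> int -> R) : R :=
  Num.sqrt (h ^+ 2 * gridsum M (fun i j => f i j ^+ 2)).

Definition gradabs (h : R) (v : int -> int -> R) (i j : int) : R :=
  Num.sqrt (Dx h v i j ^+ 2 + Dy h v i j ^+ 2).

Definition grad_lq (h : R) (M : nat) (q : R) (v : int -> int -> R) : R :=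
  powR (h ^+ 2 * gridsum M (fun i j => powR (gradabs h v i j) q)) q^-1.

End GridDefs.

From HB Require Import structures.
From mathcomp Require Import all_boot all_order all_algebra.
From mathcomp Require Import reals exp.
From mathcomp Require Import ring lra.
Import Order.TTheory GRing.Theory Num.Theory.
Local Open Scope ring_scope.

Set Implicit Arguments.
Unset Strict Implicit.
Unset Printing Implicit Defensive.

(* Along a periodic row a grid
   value is at most the row mean plus the total variation; doing this in both
   directions gives  sum F G <= (sum F / M + sum |dx F|) (sum G / M + sum |dy G|)
   for F, G >= 0.  For a component f of grad_h v take F = G = f^2 (resp. |f|^3):
   by Cauchy-Schwarz the variations are at most 2 |dx f| |f| (resp. 3 |dx f| |f^2|)
   in l^2.  Summation by parts gives |lap_h v|^2 = |d2x v|^2 + |d2y v|^2 + 2 |dxy v|^2,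
   and since the forward differences of Dx v and Dy v are h times averages of
   d2x v, d2y v and dxy v, the sum of their squares is at most |lap_h v|^2 (the
   powers of h cancel).  As M h = L this yields
   |f|_4^4 <= |f|^2 (|f| / L + 2 |lap_h v|)^2 and |f|_6^6 <= |f|^2 (|f| / L + 3 |lap_h v|)^4,
   and adding the two components gives the theorem with K1 = K2 = 2. *)

Definition dx (V : zmodType) (F : int -> int -> V) (i j : int) : V := F (i + 1) j - F i j.
Definition dy (V : zmodType) (F : int -> int -> V) (i j : int) : V := F i (j + 1) - F i j.

Definition dxy (R : realType) (h : R) (v : int -> int -> R) (i j : int) : R :=
  dx (dy v) i j / h ^+ 2.

Section RealFacts.
Variable R : realType.

Lemma sumr_CauchySchwarz (I : Type) (r : seq I) (a b : I -> R) :
  (\sum_(k <- r) a k * b k) ^+ 2 <= (\sum_(k <- r) a k ^+ 2) * \sum_(k <- r) b k ^+ 2.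
Proof.
elim: r => [|k r IH]; first by rewrite !big_nil mul0r expr0n.
rewrite !big_cons.
set S := \sum_(_ <- r) _ * _ in IH *; set A := \sum_(_ <- r) a _ ^+ 2 in IH *.
set B := \sum_(_ <- r) b _ ^+ 2 in IH *.
have [A0 B0] : 0 <= A /\ 0 <= B by split; apply: sumr_ge0 => *; apply: sqr_ge0.
have S_le : `|S| <= Num.sqrt A * Num.sqrt B by rewrite -sqrtrM // -sqrtr_sqr ler_wsqrtr.
have cross : a k * b k * S <= `|a k| * `|b k| * (Num.sqrt A * Num.sqrt B).
  apply: le_trans (ler_norm _) _.
  by rewrite !normrM ler_wpM2l // mulr_ge0.
have amgm : 2 * (`|a k| * `|b k| * (Num.sqrt A * Num.sqrt B)) <=
            `|a k| ^+ 2 * Num.sqrt B ^+ 2 + `|b k| ^+ 2 * Num.sqrt A ^+ 2.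
  by have := sqr_ge0 (`|a k| * Num.sqrt B - `|b k| * Num.sqrt A); nra.
rewrite !sqr_sqrtr // !real_normK ?num_real // in amgm.
nra.
Qed.

Lemma sumr_CauchySchwarz_sqrt (I : Type) (r : seq I) (a b : I -> R) :
  \sum_(k <- r) a k * b k <=
  Num.sqrt (\sum_(k <- r) a k ^+ 2) * Num.sqrt (\sum_(k <- r) b k ^+ 2).
Proof.
rewrite -sqrtrM; last by apply: sumr_ge0 => *; apply: sqr_ge0.
by rewrite (le_trans (ler_norm _)) // -sqrtr_sqr ler_wsqrtr // sumr_CauchySchwarz.
Qed.

(* The factor [1] matches the shape of the hypothesis of [gridsum_sqr_comp_le]. *)
Lemma dist_sqr_le (x y : R) : `|x ^+ 2 - y ^+ 2| <= 1 * `|x - y| * (`|x| + `|y|).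
Proof. by rewrite mul1r subr_sqr normrM ler_wpM2l ?normr_ge0 ?ler_normD. Qed.

Lemma dist_norm_cube_le (x y : R) :
  `| `|x| ^+ 3 - `|y| ^+ 3| <= 3 / 2 * `|x - y| * (x ^+ 2 + y ^+ 2).
Proof.
have [x_ge0 y_ge0] := conj (normr_ge0 x) (normr_ge0 y).
rewrite (_ : `|x| ^+ 3 - `|y| ^+ 3 =
             (`|x| - `|y|) * (`|x| ^+ 2 + `|x| * `|y| + `|y| ^+ 2)); last by ring.
rewrite normrM [X in _ * X]ger0_norm; last by nra.
rewrite mulrC -mulrA [_ * (_ + _)]mulrC mulrA.
apply: ler_pM; rewrite ?normr_ge0 ?ler_dist_dist //; first by nra.
have := sqr_ge0 (`|x| - `|y|).
by rewrite -(real_normK (num_real x)) -(real_normK (num_real y)); lra.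
Qed.

Lemma sqrD_le (x y : R) : (x + y) ^+ 2 <= 2 * (x ^+ 2 + y ^+ 2).
Proof. by have := sqr_ge0 (x - y); lra. Qed.

Lemma cubeD_le (x y : R) : 0 <= x -> 0 <= y -> (x + y) ^+ 3 <= 4 * (x ^+ 3 + y ^+ 3).
Proof. by move=> x_ge0 y_ge0; have := mulr_ge0 (addr_ge0 x_ge0 y_ge0) (sqr_ge0 (x - y)); lra. Qed.

Lemma sqr_mulD_le (a b c x y z : R) : 0 <= x <= z -> 0 <= y <= z ->
  a ^+ 2 + b ^+ 2 = c ^+ 2 -> (a * x) ^+ 2 + (b * y) ^+ 2 <= (c * z) ^+ 2.
Proof.
move=> /andP[x_ge0 xz] /andP[y_ge0 yz] abc; rewrite !exprMn -abc.
have xz2 : x ^+ 2 <= z ^+ 2 by rewrite ler_pXn2r ?nnegrE //; apply: le_trans xz.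
have yz2 : y ^+ 2 <= z ^+ 2 by rewrite ler_pXn2r ?nnegrE //; apply: le_trans yz.
have := sqr_ge0 a; have := sqr_ge0 b; nra.
Qed.

Lemma sqr_mulD_mono_le (phi : R -> R) (a b c : R) :
  {in Num.nneg &, {homo phi : x y / x <= y}} -> {in Num.nneg, forall x, 0 <= phi x} ->
  0 <= a -> 0 <= b -> 0 <= c -> a ^+ 2 + b ^+ 2 = c ^+ 2 ->
  (a * phi a) ^+ 2 + (b * phi b) ^+ 2 <= (c * phi c) ^+ 2.
Proof.
move=> phi_mono phi_ge0 a_ge0 b_ge0 c_ge0 abc.
have [ac bc] : a <= c /\ b <= c.
  by split; rewrite -(ler_pXn2r (_ : (0 < 2)%N)) ?nnegrE // -abc ?lerDl ?lerDr sqr_ge0.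
by apply: sqr_mulD_le abc; rewrite ?phi_ge0 ?phi_mono ?nnegrE.
Qed.

Lemma powR_invnK (x : R) (n : nat) : (0 < n)%N -> 0 <= x -> (x `^ n%:R^-1) ^+ n = x.
Proof.
move=> n_gt0 x_ge0; rewrite -powR_mulrn ?powR_ge0 // -powRrM mulVf ?powRr1 //.
by rewrite pnatr_eq0 -lt0n.
Qed.

Lemma powR_invn_le (x y : R) (n : nat) : (0 < n)%N -> 0 <= x -> 0 <= y ->
  x <= y ^+ n -> x `^ n%:R^-1 <= y.
Proof.
by move=> n_gt0 x_ge0 y_ge0 xy; rewrite -(ler_pXn2r n_gt0) ?nnegrE ?powR_ge0 ?powR_invnK.
Qed.

End RealFacts.

Section GridSum.
Variables (R : realType) (M : nat).
Implicit Types (F G : int -> int -> R) (c : R).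

Lemma eq_gridsum F G : (forall i j, F i j = G i j) -> gridsum M F = gridsum M G.
Proof. by move=> FG; apply: eq_bigr => i _; apply: eq_bigr => j _. Qed.

Lemma gridsumD F G : gridsum M (fun i j => F i j + G i j) = gridsum M F + gridsum M G.
Proof. by rewrite /gridsum -big_split; apply: eq_bigr => i _; rewrite big_split. Qed.

Lemma gridsumB F G : gridsum M (fun i j => F i j - G i j) = gridsum M F - gridsum M G.
Proof. by rewrite /gridsum -sumrB; apply: eq_bigr => i _; rewrite sumrB. Qed.

Lemma gridsumZ c F : gridsum M (fun i j => c * F i j) = c * gridsum M F.
Proof. by rewrite /gridsum mulr_sumr; apply: eq_bigr => i _; rewrite mulr_sumr. Qed.

Lemma ler_gridsum F G : (forall i j, F i j <= G i j) -> gridsum M F <= gridsum M G.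
Proof. by move=> FG; apply: ler_sum => i _; apply: ler_sum => j _. Qed.

Lemma gridsum_ge0 F : (forall i j, 0 <= F i j) -> 0 <= gridsum M F.
Proof. by move=> F0; apply: sumr_ge0 => i _; apply: sumr_ge0 => j _. Qed.

Lemma gridsum_sqr_ge0 F : 0 <= gridsum M (fun i j => F i j ^+ 2).
Proof. by apply: gridsum_ge0 => i j; apply: sqr_ge0. Qed.

Lemma gridsum_sqr_norm F :
  gridsum M (fun i j => `|F i j| ^+ 2) = gridsum M (fun i j => F i j ^+ 2).
Proof. by apply: eq_gridsum => i j; rewrite real_normK ?num_real. Qed.

Lemma l2norm_sqr (h : R) F : l2norm h M F ^+ 2 = h ^+ 2 * gridsum M (fun i j => F i j ^+ 2).
Proof. by rewrite sqr_sqrtr // mulr_ge0 ?sqr_ge0 ?gridsum_sqr_ge0. Qed.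

Lemma l2normE (h : R) F : 0 <= h ->
  l2norm h M F = h * Num.sqrt (gridsum M (fun i j => F i j ^+ 2)).
Proof. by move=> h_ge0; rewrite /l2norm sqrtrM ?sqr_ge0 // sqrtr_sqr ger0_norm. Qed.

Lemma gridsum_sqrD_le F G : gridsum M (fun i j => (F i j + G i j) ^+ 2) <=
  2 * gridsum M (fun i j => F i j ^+ 2) + 2 * gridsum M (fun i j => G i j ^+ 2).
Proof.
by rewrite -!gridsumZ -gridsumD; apply: ler_gridsum => i j; rewrite -mulrDr sqrD_le.
Qed.

Lemma gridsum_sqr_mean_le F G :
  gridsum M (fun i j => G i j ^+ 2) = gridsum M (fun i j => F i j ^+ 2) ->
  gridsum M (fun i j => ((F i j + G i j) / 2) ^+ 2) <= gridsum M (fun i j => F i j ^+ 2).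
Proof.
move=> GF; have := gridsum_sqrD_le F G; rewrite GF.
have -> : gridsum M (fun i j => ((F i j + G i j) / 2) ^+ 2) =
          4^-1 * gridsum M (fun i j => (F i j + G i j) ^+ 2).
  by rewrite -gridsumZ; apply: eq_gridsum => i j; field.
lra.
Qed.

Lemma gridsum_CauchySchwarz F G : gridsum M (fun i j => F i j * G i j) <=
  Num.sqrt (gridsum M (fun i j => F i j ^+ 2)) * Num.sqrt (gridsum M (fun i j => G i j ^+ 2)).
Proof.
have rowE H : \sum_(1 <= i < M.+1) Num.sqrt (\sum_(1 <= j < M.+1) H i%:Z j%:Z ^+ 2) ^+ 2 =
              gridsum M (fun i j => H i j ^+ 2).
  by apply: eq_bigr => i _; rewrite sqr_sqrtr // sumr_ge0 // => j _; apply: sqr_ge0.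
rewrite -!rowE; apply: le_trans (sumr_CauchySchwarz_sqrt _ _ _).
by apply: ler_sum => i _; apply: sumr_CauchySchwarz_sqrt.
Qed.

Lemma gridsum_norm_cube_le F : gridsum M (fun i j => `|F i j| ^+ 3) <=
  Num.sqrt (gridsum M (fun i j => F i j ^+ 2)) *
  Num.sqrt (gridsum M (fun i j => (F i j ^+ 2) ^+ 2)).
Proof.
rewrite (eq_gridsum (G := fun i j => `|F i j| * F i j ^+ 2)); last first.
  by move=> i j; rewrite -(real_normK (num_real (F i j))); ring.
by apply: le_trans (gridsum_CauchySchwarz _ _) _; rewrite gridsum_sqr_norm.
Qed.

End GridSum.

(* Moves the period [M] to the outside of every index, then folds it away with
   the periodicity hypotheses in context. *)
Local Ltac periodicity M :=
  move=> ? ?; split; rewrite /= /dx /dy ?(addrAC _ (Posz M));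
  repeat match goal with pF : periodic M _ |- _ =>
    rewrite ?(fun i j => (pF i j).1) ?(fun i j => (pF i j).2); clear pF end.

Section Torus.
Variables (R : realType) (M : nat).
Implicit Types F G v : int -> int -> R.

Lemma sumr_shift_periodic (f : int -> R) : (forall i, f (i + M%:Z) = f i) ->
  \sum_(1 <= i < M.+1) f (i%:Z + 1) = \sum_(1 <= i < M.+1) f i%:Z.
Proof.
case: M => [|n] fP; first by rewrite !big_geq.
rewrite [LHS]big_nat_recr // [RHS]big_nat_recl //= addrC; congr (_ + _).
  by rewrite addrC fP.
by apply: eq_bigr => i _; rewrite -addn1 PoszD.
Qed.

Lemma gridsum_shiftx F : periodic M F -> gridsum M (fun i j => F (i + 1) j) = gridsum M F.
Proof.
move=> pF; rewrite /gridsum.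
apply: (sumr_shift_periodic (f := fun i => \sum_(1 <= j < M.+1) F i j%:Z)) => i.
by apply: eq_bigr => j _; rewrite (pF _ _).1.
Qed.

Lemma gridsum_shifty F : periodic M F -> gridsum M (fun i j => F i (j + 1)) = gridsum M F.
Proof.
move=> pF; apply: eq_bigr => i _ /=.
by apply: (sumr_shift_periodic (f := F i%:Z)) => j; rewrite (pF _ _).2.
Qed.

Lemma gridsum_shiftxN F : periodic M F -> gridsum M (fun i j => F (i - 1) j) = gridsum M F.
Proof.
move=> pF; rewrite -(gridsum_shiftx (F := fun i j => F (i - 1) j)); last by periodicity M.
by apply: eq_gridsum => i j; rewrite addrK.
Qed.

Lemma gridsum_shiftyN F : periodic M F -> gridsum M (fun i j => F i (j - 1)) = gridsum M F.
Proof.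
move=> pF; rewrite -(gridsum_shifty (F := fun i j => F i (j - 1))); last by periodicity M.
by apply: eq_gridsum => i j; rewrite addrK.
Qed.

Lemma periodic_comp (p : R -> R) F : periodic M F -> periodic M (fun i j => p (F i j)).
Proof. by move=> pF; periodicity M. Qed.

Lemma periodic_dx F : periodic M F -> periodic M (dx F).
Proof. by move=> pF; periodicity M. Qed.

Lemma periodic_dy F : periodic M F -> periodic M (dy F).
Proof. by move=> pF; periodicity M. Qed.

Lemma gridsum_dx_mul F G : periodic M F -> periodic M G ->
  gridsum M (fun i j => dx F (i - 1) j * G i j) = - gridsum M (fun i j => F i j * dx G i j).
Proof.
move=> pF pG.
have shift : gridsum M (fun i j => F (i - 1) j * G i j) =
             gridsum M (fun i j => F i j * G (i + 1) j).
  rewrite -(gridsum_shiftx (F := fun i j => F (i - 1) j * G i j)); last by periodicity M.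
  by apply: eq_gridsum => i j; rewrite addrK.
transitivity (gridsum M (fun i j => F i j * G i j) - gridsum M (fun i j => F i j * G (i + 1) j)).
  by rewrite -shift -gridsumB; apply: eq_gridsum => i j; rewrite /dx subrK mulrBl.
by rewrite -opprB -gridsumB; congr (- _); apply: eq_gridsum => i j; rewrite /dx mulrBr.
Qed.

Lemma gridsum_dy_mul F G : periodic M F -> periodic M G ->
  gridsum M (fun i j => dy F i (j - 1) * G i j) = - gridsum M (fun i j => F i j * dy G i j).
Proof.
move=> pF pG.
have shift : gridsum M (fun i j => F i (j - 1) * G i j) =
             gridsum M (fun i j => F i j * G i (j + 1)).
  rewrite -(gridsum_shifty (F := fun i j => F i (j - 1) * G i j)); last by periodicity M.
  by apply: eq_gridsum => i j; rewrite addrK.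
transitivity (gridsum M (fun i j => F i j * G i j) - gridsum M (fun i j => F i j * G i (j + 1))).
  by rewrite -shift -gridsumB; apply: eq_gridsum => i j; rewrite /dy subrK mulrBl.
by rewrite -opprB -gridsumB; congr (- _); apply: eq_gridsum => i j; rewrite /dy mulrBr.
Qed.

Lemma gridsum_dxdx_dydy v : periodic M v ->
  gridsum M (fun i j => dx (dx v) (i - 1) j * dy (dy v) i (j - 1)) =
  gridsum M (fun i j => dx (dy v) i j ^+ 2).
Proof.
move=> pv.
transitivity (- gridsum M (fun i j => dy (dy (dx v)) i (j - 1) * dx v i j)).
  rewrite gridsum_dx_mul; [|exact: periodic_dx|by periodicity M].
  by congr (- _); apply: eq_gridsum => i j; rewrite /dx /dy; ring.
rewrite gridsum_dy_mul ?opprK; [|exact/periodic_dy/periodic_dx|exact: periodic_dx].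
by apply: eq_gridsum => i j; rewrite /dx /dy; ring.
Qed.

End Torus.

Section FiniteDifferences.
Variables (R : realType) (M : nat) (h : R) (v : int -> int -> R).
Hypotheses (h_neq0 : h != 0) (pv : periodic M v).

Lemma periodic_Dx : periodic M (Dx h v). Proof. by rewrite /Dx; periodicity M. Qed.
Lemma periodic_Dy : periodic M (Dy h v). Proof. by rewrite /Dy; periodicity M. Qed.
Lemma periodic_d2x : periodic M (d2x h v). Proof. by rewrite /d2x; periodicity M. Qed.
Lemma periodic_d2y : periodic M (d2y h v). Proof. by rewrite /d2y; periodicity M. Qed.
Lemma periodic_dxy : periodic M (dxy h v). Proof. by rewrite /dxy; periodicity M. Qed.

Lemma gridsum_d2x_d2y :
  gridsum M (fun i j => d2x h v i j * d2y h v i j) = gridsum M (fun i j => dxy h v i j ^+ 2).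
Proof.
transitivity (gridsum M (fun i j =>
    (h ^+ 4)^-1 * (dx (dx v) (i - 1) j * dy (dy v) i (j - 1)))).
  by apply: eq_gridsum => i j; rewrite /d2x /d2y /dx /dy !subrK; field; rewrite h_neq0.
rewrite gridsumZ gridsum_dxdx_dydy // -gridsumZ.
by apply: eq_gridsum => i j; rewrite /dxy; field; rewrite h_neq0.
Qed.

Lemma gridsum_lap_sqr : gridsum M (fun i j => lap_h h v i j ^+ 2) =
  gridsum M (fun i j => d2x h v i j ^+ 2) + gridsum M (fun i j => d2y h v i j ^+ 2)
  + 2 * gridsum M (fun i j => dxy h v i j ^+ 2).
Proof.
rewrite -gridsum_d2x_d2y -gridsumZ -!gridsumD.
by apply: eq_gridsum => i j; rewrite /lap_h; ring.
Qed.

Lemma gridsum_sqr_le_lap :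
  let lap2 := gridsum M (fun i j => lap_h h v i j ^+ 2) in
  [/\ gridsum M (fun i j => d2x h v i j ^+ 2) <= lap2,
      gridsum M (fun i j => d2y h v i j ^+ 2) <= lap2 &
      gridsum M (fun i j => dxy h v i j ^+ 2) <= lap2].
Proof.
rewrite /= gridsum_lap_sqr.
have := gridsum_sqr_ge0 M (d2x h v); have := gridsum_sqr_ge0 M (d2y h v).
have := gridsum_sqr_ge0 M (dxy h v).
by split; lra.
Qed.

Let q := l2norm h M (lap_h h v).

Lemma gridsum_sqr_scaled_mean_le P Q :
  gridsum M (fun i j => Q i j ^+ 2) = gridsum M (fun i j => P i j ^+ 2) ->
  gridsum M (fun i j => P i j ^+ 2) <= gridsum M (fun i j => lap_h h v i j ^+ 2) ->
  gridsum M (fun i j => (h * ((P i j + Q i j) / 2)) ^+ 2) <= q ^+ 2.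
Proof.
move=> QP P_le; rewrite /q l2norm_sqr.
under eq_gridsum do rewrite exprMn.
rewrite gridsumZ ler_wpM2l ?sqr_ge0 //.
exact: le_trans (gridsum_sqr_mean_le QP) P_le.
Qed.

Lemma Dx_variation_le : gridsum M (fun i j => dx (Dx h v) i j ^+ 2) <= q ^+ 2 /\
                        gridsum M (fun i j => dy (Dx h v) i j ^+ 2) <= q ^+ 2.
Proof.
have [d2x_le _ dxy_le] := gridsum_sqr_le_lap; split.
- rewrite (eq_gridsum M (G := fun i j => (h * ((d2x h v i j + d2x h v (i + 1) j) / 2)) ^+ 2)).
    apply: gridsum_sqr_scaled_mean_le d2x_le.
    exact: (gridsum_shiftx (periodic_comp (fun x => x ^+ 2) periodic_d2x)).
  by move=> i j; rewrite /dx /Dx /d2x addrK; field; rewrite h_neq0.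
- rewrite (eq_gridsum M (G := fun i j => (h * ((dxy h v i j + dxy h v (i - 1) j) / 2)) ^+ 2)).
    apply: gridsum_sqr_scaled_mean_le dxy_le.
    exact: (gridsum_shiftxN (periodic_comp (fun x => x ^+ 2) periodic_dxy)).
  by move=> i j; rewrite /dxy /dx /dy /Dx subrK; field; rewrite h_neq0.
Qed.

Lemma Dy_variation_le : gridsum M (fun i j => dx (Dy h v) i j ^+ 2) <= q ^+ 2 /\
                        gridsum M (fun i j => dy (Dy h v) i j ^+ 2) <= q ^+ 2.
Proof.
have [_ d2y_le dxy_le] := gridsum_sqr_le_lap; split.
- rewrite (eq_gridsum M (G := fun i j => (h * ((dxy h v i j + dxy h v i (j - 1)) / 2)) ^+ 2)).
    apply: gridsum_sqr_scaled_mean_le dxy_le.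
    exact: (gridsum_shiftyN (periodic_comp (fun x => x ^+ 2) periodic_dxy)).
  by move=> i j; rewrite /dxy /dx /dy /Dy subrK; field; rewrite h_neq0.
- rewrite (eq_gridsum M (G := fun i j => (h * ((d2y h v i j + d2y h v i (j + 1)) / 2)) ^+ 2)).
    apply: gridsum_sqr_scaled_mean_le d2y_le.
    exact: (gridsum_shifty (periodic_comp (fun x => x ^+ 2) periodic_d2y)).
  by move=> i j; rewrite /dy /Dy /d2y addrK; field; rewrite h_neq0.
Qed.

End FiniteDifferences.

Section Ladyzhenskaya.
Variable R : realType.

Lemma ler_sum_nat_subrange (D : nat -> R) (m k i n : nat) : (forall l, 0 <= D l) ->
  (m <= k)%N -> (k <= i)%N -> (i <= n)%N -> \sum_(k <= l < i) D l <= \sum_(m <= l < n) D l.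
Proof.
move=> D0 mk ki i_n; rewrite (big_cat_nat mk (leq_trans ki i_n)) (big_cat_nat ki i_n) /=.
by rewrite ler_wpDl ?sumr_ge0 // ler_wpDr ?sumr_ge0.
Qed.

Lemma le_mean_add_variation (a : nat -> R) (M i : nat) : (0 < M)%N -> (1 <= i <= M)%N ->
  a i <= (\sum_(1 <= k < M.+1) a k) / M%:R + \sum_(1 <= l < M.+1) `|a l.+1 - a l|.
Proof.
move=> M_gt0 /andP[i1 iM]; set TV := \sum_(1 <= l < M.+1) `|_|.
have dist k : (1 <= k <= M)%N -> `|a i - a k| <= TV.
  move=> /andP[k1 kM]; wlog ki : i k i1 iM k1 kM / (k <= i)%N.
    move=> wlog_ki; case: (leqP k i) => [|/ltnW ik]; first exact: wlog_ki.
    by rewrite distrC; apply: wlog_ki.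
  rewrite -(telescope_sumr a ki); apply: le_trans (ler_norm_sum _ _ _) _.
  by apply: (ler_sum_nat_subrange _ k1 ki (leqW iM)) => l; apply: normr_ge0.
have M_pos : 0 < M%:R :> R by rewrite ltr0n.
rewrite -(ler_pM2r M_pos) mulrDl divfK ?gt_eqF //.
have : \sum_(1 <= k < M.+1) a i <= \sum_(1 <= k < M.+1) (a k + TV).
  apply: ler_sum_nat => k kM; have := dist k kM; have := ler_norm (a i - a k); lra.
by rewrite big_split /= !sumr_const_nat subSS subn0 !mulr_natr.
Qed.

Lemma gridsum_mul_le_mean_variation (M : nat) (F G : int -> int -> R) : (0 < M)%N ->
  (forall i j, 0 <= F i j) -> (forall i j, 0 <= G i j) ->
  gridsum M (fun i j => F i j * G i j) <=
  (gridsum M F / M%:R + gridsum M (fun i j => `|dx F i j|)) *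
  (gridsum M G / M%:R + gridsum M (fun i j => `|dy G i j|)).
Proof.
move=> M_gt0 F0 G0.
pose alpha (j : nat) := (\sum_(1 <= k < M.+1) F k%:Z j%:Z) / M%:R +
  \sum_(1 <= k < M.+1) `|F k.+1%:Z j%:Z - F k%:Z j%:Z|.
pose beta (i : nat) := (\sum_(1 <= k < M.+1) G i%:Z k%:Z) / M%:R +
  \sum_(1 <= k < M.+1) `|G i%:Z k.+1%:Z - G i%:Z k%:Z|.
have alphaE : \sum_(1 <= j < M.+1) alpha j =
              gridsum M F / M%:R + gridsum M (fun i j => `|dx F i j|).
  rewrite big_split /= -mulr_suml /gridsum exchange_big; congr (_ + _).
  by rewrite exchange_big; apply: eq_bigr => i _; apply: eq_bigr => j _; rewrite /dx -addn1 PoszD.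
have betaE : \sum_(1 <= i < M.+1) beta i =
             gridsum M G / M%:R + gridsum M (fun i j => `|dy G i j|).
  rewrite big_split /= -mulr_suml; congr (_ + _).
  by apply: eq_bigr => i _; apply: eq_bigr => j _; rewrite /dy -addn1 PoszD.
rewrite -alphaE -betaE mulrC mulr_suml; apply: ler_sum_nat => i iM.
rewrite mulr_sumr; apply: ler_sum_nat => j jM; rewrite mulrC.
apply: ler_pM; [exact: F0|exact: G0|exact: le_mean_add_variation|].
exact: (le_mean_add_variation (fun k => G i%:Z k%:Z)).
Qed.

End Ladyzhenskaya.

Section Variation.
Variables (R : realType) (M : nat) (phi psi : R -> R) (c : R).
Hypotheses (c_ge0 : 0 <= c)
  (phi_lip : forall x y, `|phi x - phi y| <= c * `|x - y| * (psi x + psi y)).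

Lemma gridsum_variation_le (f f' : int -> int -> R) :
  gridsum M (fun i j => psi (f' i j) ^+ 2) = gridsum M (fun i j => psi (f i j) ^+ 2) ->
  gridsum M (fun i j => `|phi (f' i j) - phi (f i j)|) <=
  2 * c * Num.sqrt (gridsum M (fun i j => (f' i j - f i j) ^+ 2)) *
  Num.sqrt (gridsum M (fun i j => psi (f i j) ^+ 2)).
Proof.
move=> psiE; set s := fun i j => psi (f' i j) + psi (f i j).
set D := Num.sqrt _; set P := Num.sqrt (gridsum M (fun i j => psi (f i j) ^+ 2)).
have s_le : Num.sqrt (gridsum M (fun i j => s i j ^+ 2)) <= 2 * P.
  rewrite -[2 * P]ger0_norm ?mulr_ge0 ?sqrtr_ge0 // -sqrtr_sqr; apply: ler_wsqrtr.
  rewrite exprMn sqr_sqrtr ?gridsum_sqr_ge0 //.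
  have := gridsum_sqrD_le M (fun i j => psi (f' i j)) (fun i j => psi (f i j)).
  by rewrite psiE; lra.
have cs := gridsum_CauchySchwarz M (fun i j => `|f' i j - f i j|) s.
rewrite (gridsum_sqr_norm M (fun i j => f' i j - f i j)) -/D in cs.
apply: le_trans (_ : c * gridsum M (fun i j => `|f' i j - f i j| * s i j) <= _).
  by rewrite -gridsumZ; apply: ler_gridsum => i j; rewrite mulrA.
have [D_ge0 S_ge0] : 0 <= D /\ 0 <= Num.sqrt (gridsum M (fun i j => s i j ^+ 2)).
  by split; apply: sqrtr_ge0.
have cD_ge0 : 0 <= c * D := mulr_ge0 c_ge0 D_ge0.
have := ler_wpM2l c_ge0 cs; nra.
Qed.

Lemma gridsum_sqr_comp_le (q : R) (f : int -> int -> R) :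
  (0 < M)%N -> 0 <= q -> (forall x, 0 <= phi x) -> periodic M f ->
  gridsum M (fun i j => dx f i j ^+ 2) <= q ^+ 2 ->
  gridsum M (fun i j => dy f i j ^+ 2) <= q ^+ 2 ->
  gridsum M (fun i j => phi (f i j) ^+ 2) <=
  (gridsum M (fun i j => phi (f i j)) / M%:R +
   2 * c * q * Num.sqrt (gridsum M (fun i j => psi (f i j) ^+ 2))) ^+ 2.
Proof.
move=> M_gt0 q_ge0 phi_ge0 pf fx fy.
have var_le (f' : int -> int -> R) :
    gridsum M (fun i j => psi (f' i j) ^+ 2) = gridsum M (fun i j => psi (f i j) ^+ 2) ->
    gridsum M (fun i j => (f' i j - f i j) ^+ 2) <= q ^+ 2 ->
    gridsum M (fun i j => `|phi (f' i j) - phi (f i j)|) <=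
    2 * c * q * Num.sqrt (gridsum M (fun i j => psi (f i j) ^+ 2)).
  move=> psiE d_le; apply: le_trans (gridsum_variation_le psiE) _.
  rewrite ler_wpM2r ?sqrtr_ge0 // ler_wpM2l ?mulr_ge0 //.
  by rewrite -(ger0_norm q_ge0) -sqrtr_sqr ler_wsqrtr.
have mean_ge0 : 0 <= gridsum M (fun i j => phi (f i j)) / M%:R.
  by rewrite divr_ge0 ?gridsum_ge0.
rewrite expr2; apply: le_trans (gridsum_mul_le_mean_variation M_gt0 _ _) _; try by move=> *.
apply: ler_pM; rewrite ?addr_ge0 ?gridsum_ge0 // ?lerD2l.
- apply: var_le fx; exact: (gridsum_shiftx (periodic_comp (fun x => psi x ^+ 2) pf)).
- apply: var_le fy; exact: (gridsum_shifty (periodic_comp (fun x => psi x ^+ 2) pf)).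
Qed.

End Variation.

Section Components.
Variables (R : realType) (M : nat) (h L q : R) (f : int -> int -> R).
Hypotheses (M_gt0 : (0 < M)%N) (h_gt0 : 0 < h) (MhL : M%:R * h = L) (q_ge0 : 0 <= q).
Hypotheses (pf : periodic M f) (fx : gridsum M (fun i j => dx f i j ^+ 2) <= q ^+ 2)
  (fy : gridsum M (fun i j => dy f i j ^+ 2) <= q ^+ 2).

Let a := Num.sqrt (gridsum M (fun i j => f i j ^+ 2)).
Let b := Num.sqrt (gridsum M (fun i j => (f i j ^+ 2) ^+ 2)).

Let L_gt0 : 0 < L. Proof. by rewrite -MhL mulr_gt0 ?ltr0n. Qed.

Let l2norm_f : l2norm h M f = h * a.
Proof. exact/l2normE/ltW. Qed.

Let a_over_M : a / M%:R = l2norm h M f / L.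
Proof. by rewrite l2norm_f -MhL; field; rewrite pnatr_eq0 -lt0n M_gt0 gt_eqF. Qed.

Lemma gridsum_pow4_le : h ^+ 2 * gridsum M (fun i j => (f i j ^+ 2) ^+ 2) <=
  (l2norm h M f * (l2norm h M f / L + 2 * q)) ^+ 2.
Proof.
have := gridsum_sqr_comp_le ler01 (@dist_sqr_le R) M_gt0 q_ge0 (@sqr_ge0 _) pf fx fy.
rewrite gridsum_sqr_norm -/a -(sqr_sqrtr (gridsum_sqr_ge0 M f)) -/a => bound.
rewrite [leRHS](_ : _ = h ^+ 2 * (a ^+ 2 / M%:R + 2 * 1 * q * a) ^+ 2).
  by rewrite ler_pM2l ?exprn_gt0.
by rewrite -a_over_M l2norm_f; field; rewrite pnatr_eq0 -lt0n M_gt0.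
Qed.

Lemma gridsum_norm_cube_sqr_le :
  gridsum M (fun i j => (`|f i j| ^+ 3) ^+ 2) <= (b * (a / M%:R + 3 * q)) ^+ 2.
Proof.
have c_ge0 : 0 <= 3 / 2 :> R by lra.
have := gridsum_sqr_comp_le c_ge0 (@dist_norm_cube_le R) M_gt0 q_ge0
  (fun x => exprn_ge0 3 (normr_ge0 x)) pf fx fy.
have := gridsum_norm_cube_le M f; rewrite -/a -/b.
have [a_ge0 b_ge0] : 0 <= a /\ 0 <= b by split; apply: sqrtr_ge0.
have S_ge0 : 0 <= gridsum M (fun i j => `|f i j| ^+ 3).
  by apply: gridsum_ge0 => i j; apply/exprn_ge0/normr_ge0.
move: (gridsum M _) S_ge0 => S S_ge0 S_le bound; apply: le_trans bound _.
have M_pos : 0 < M%:R :> R by rewrite ltr0n.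
have SM : S / M%:R <= b * (a / M%:R) by rewrite mulrA (mulrC b) ler_pM2r ?invr_gt0.
have [aM_ge0 SM_ge0] : 0 <= a / M%:R /\ 0 <= S / M%:R by split; apply: divr_ge0.
have qb_ge0 : 0 <= q * b by rewrite mulr_ge0.
rewrite ler_pXn2r // ?nnegrE; [lra|lra|].
by rewrite mulr_ge0 // addr_ge0 // mulr_ge0.
Qed.

Lemma gridsum_pow6_le : h ^+ 2 * gridsum M (fun i j => (f i j ^+ 2) ^+ 3) <=
  (l2norm h M f * (l2norm h M f / L + 3 * q) ^+ 2) ^+ 2.
Proof.
set A := l2norm h M f.
have h_ge0 : 0 <= h := ltW h_gt0.
have A_ge0 : 0 <= A by rewrite /A l2norm_f mulr_ge0 ?sqrtr_ge0.
have X_ge0 : 0 <= A / L + 3 * q by rewrite addr_ge0 ?divr_ge0 ?mulr_ge0 // ltW.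
have hb_le : h * b <= A * (A / L + 2 * q).
  have hb_ge0 : 0 <= h * b by rewrite mulr_ge0 ?sqrtr_ge0.
  have rhs_ge0 : 0 <= A * (A / L + 2 * q) by rewrite mulr_ge0 ?addr_ge0 ?divr_ge0 ?mulr_ge0 // ltW.
  rewrite -(ler_pXn2r (_ : (0 < 2)%N)) ?nnegrE // exprMn sqr_sqrtr ?gridsum_sqr_ge0 //.
  exact: gridsum_pow4_le.
rewrite (eq_gridsum M (G := fun i j => (`|f i j| ^+ 3) ^+ 2)); last first.
  by move=> i j; rewrite -(real_normK (num_real (f i j))); ring.
apply: le_trans (_ : h ^+ 2 * (b * (A / L + 3 * q)) ^+ 2 <= _).
  by rewrite ler_pM2l ?exprn_gt0 // -a_over_M gridsum_norm_cube_sqr_le.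
rewrite -exprMn mulrA ler_pXn2r ?nnegrE ?mulr_ge0 ?sqrtr_ge0 // expr2 mulrA.
apply: ler_pM; rewrite ?mulr_ge0 ?sqrtr_ge0 //.
by apply: le_trans hb_le _; have := mulr_ge0 A_ge0 q_ge0; lra.
Qed.

End Components.
Section Gradient.
Variables (R : realType) (M : nat) (h L : R) (v : int -> int -> R).

Lemma grad_lqE (n : nat) : grad_lq h M n%:R v =
  (h ^+ 2 * gridsum M (fun i j => gradabs h v i j ^+ n)) `^ n%:R^-1.
Proof.
rewrite /grad_lq; congr (_ `^ _); congr (_ * _).
by apply: eq_gridsum => i j; rewrite powR_mulrn // sqrtr_ge0.
Qed.

Lemma gradabs_sqr i j : gradabs h v i j ^+ 2 = Dx h v i j ^+ 2 + Dy h v i j ^+ 2.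
Proof. by rewrite sqr_sqrtr // addr_ge0 ?sqr_ge0. Qed.

Let G := grad_lq h M 2 v.
Let q := l2norm h M (lap_h h v).

Lemma grad_l2_sqr : G ^+ 2 = l2norm h M (Dx h v) ^+ 2 + l2norm h M (Dy h v) ^+ 2.
Proof.
have S_ge0 : 0 <= h ^+ 2 * gridsum M (fun i j => gradabs h v i j ^+ 2).
  by rewrite mulr_ge0 ?sqr_ge0 ?gridsum_sqr_ge0.
rewrite /G grad_lqE powR12_sqrt // sqr_sqrtr // !l2norm_sqr -mulrDr -gridsumD.
by congr (_ * _); apply: eq_gridsum => i j; rewrite gradabs_sqr.
Qed.

Lemma gridsum_gradabs_pow_le (k : nat) (C : R) :
  (forall x y : R, 0 <= x -> 0 <= y -> (x + y) ^+ k <= C * (x ^+ k + y ^+ k)) ->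
  h ^+ 2 * gridsum M (fun i j => gradabs h v i j ^+ (2 * k)) <=
  C * (h ^+ 2 * gridsum M (fun i j => (Dx h v i j ^+ 2) ^+ k) +
       h ^+ 2 * gridsum M (fun i j => (Dy h v i j ^+ 2) ^+ k)).
Proof.
move=> powD_le; rewrite -mulrDr -gridsumD mulrCA ler_wpM2l ?sqr_ge0 // -gridsumZ.
apply: ler_gridsum => i j; rewrite exprM gradabs_sqr.
exact: powD_le (sqr_ge0 _) (sqr_ge0 _).
Qed.

Hypotheses (M_gt0 : (0 < M)%N) (h_gt0 : 0 < h) (MhL : M%:R * h = L) (pv : periodic M v).

Let h_neq0 : h != 0. Proof. by rewrite gt_eqF. Qed.
Let q_ge0 : 0 <= q. Proof. exact: sqrtr_ge0. Qed.
Let G_ge0 : 0 <= G. Proof. exact: powR_ge0. Qed.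
Let L_gt0 : 0 < L. Proof. by rewrite -MhL mulr_gt0 ?ltr0n. Qed.

Lemma gridsum_grad4_le : h ^+ 2 * gridsum M (fun i j => gradabs h v i j ^+ 4) <=
  2 * (G * (G / L + 2 * q)) ^+ 2.
Proof.
have [fx fy] := Dx_variation_le h_neq0 pv; have [gx gy] := Dy_variation_le h_neq0 pv.
have f4 := gridsum_pow4_le M_gt0 h_gt0 MhL q_ge0 (periodic_Dx h pv) fx fy.
have g4 := gridsum_pow4_le M_gt0 h_gt0 MhL q_ge0 (periodic_Dy h pv) gx gy.
rewrite (_ : 4 = 2 * 2)%N //.
have := gridsum_gradabs_pow_le (k := 2) (fun x y _ _ => sqrD_le x y).
move/le_trans; apply.
rewrite ler_pM2l //; apply: le_trans (lerD f4 g4) _.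
apply: (sqr_mulD_mono_le (phi := fun x => x / L + 2 * q)); rewrite ?sqrtr_ge0 //.
- by move=> x y _ _ xy; rewrite lerD2r ler_pM2r ?invr_gt0.
- by move=> x x_ge0; rewrite addr_ge0 ?divr_ge0 ?mulr_ge0 // ltW.
- by rewrite -grad_l2_sqr.
Qed.

Lemma gridsum_grad6_le : h ^+ 2 * gridsum M (fun i j => gradabs h v i j ^+ 6) <=
  4 * (G * (G / L + 3 * q) ^+ 2) ^+ 2.
Proof.
have [fx fy] := Dx_variation_le h_neq0 pv; have [gx gy] := Dy_variation_le h_neq0 pv.
have f6 := gridsum_pow6_le M_gt0 h_gt0 MhL q_ge0 (periodic_Dx h pv) fx fy.
have g6 := gridsum_pow6_le M_gt0 h_gt0 MhL q_ge0 (periodic_Dy h pv) gx gy.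
rewrite (_ : 6 = 2 * 3)%N //.
have := gridsum_gradabs_pow_le (k := 3) (@cubeD_le R).
move/le_trans; apply.
rewrite ler_pM2l //; apply: le_trans (lerD f6 g6) _.
have phi_ge0 x : 0 <= x -> 0 <= x / L + 3 * q.
  by move=> x_ge0; rewrite addr_ge0 ?divr_ge0 ?mulr_ge0 // ltW.
apply: (sqr_mulD_mono_le (phi := fun x => (x / L + 3 * q) ^+ 2)); rewrite ?sqrtr_ge0 //.
- move=> x y x_ge0 y_ge0 xy; rewrite ler_pXn2r ?nnegrE ?phi_ge0 //.
  by rewrite lerD2r ler_pM2r ?invr_gt0.
- by move=> x x_ge0; apply: sqr_ge0.
- by rewrite -grad_l2_sqr.
Qed.

Lemma grad_l4_le : grad_lq h M 4 v <=
  2 * G `^ (1 / 2) * (2 * q ^+ 2 + 1 / L ^+ 2 * G ^+ 2) `^ (1 / 4).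
Proof.
have uE : 1 / L ^+ 2 * G ^+ 2 = (G / L) ^+ 2 by rewrite expr_div_n div1r mulrC.
have Y_ge0 : 0 <= 2 * q ^+ 2 + 1 / L ^+ 2 * G ^+ 2.
  by rewrite uE; have := sqr_ge0 q; have := sqr_ge0 (G / L); lra.
rewrite grad_lqE; apply: powR_invn_le => //.
- apply: mulr_ge0; first exact: sqr_ge0.
  by apply: gridsum_ge0 => i j; apply/exprn_ge0/sqrtr_ge0.
- by rewrite !mulr_ge0 ?powR_ge0.
have G4 : (G `^ (1 / 2)) ^+ 4 = G ^+ 2.
  by rewrite (div1r (2 : R)) (exprM _ 2 2) powR_invnK.
have Y4 : ((2 * q ^+ 2 + 1 / L ^+ 2 * G ^+ 2) `^ (1 / 4)) ^+ 4 =
          2 * q ^+ 2 + 1 / L ^+ 2 * G ^+ 2.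
  by rewrite (div1r (4 : R)) powR_invnK.
rewrite !exprMn G4 Y4.
apply: le_trans gridsum_grad4_le _; rewrite uE; set u := G / L.
have w : (u + 2 * q) ^+ 2 <= 8 * (2 * q ^+ 2 + u ^+ 2).
  by have := sqr_ge0 (u - 2 * q); have := sqr_ge0 u; have := sqr_ge0 q; lra.
have := ler_wpM2l (sqr_ge0 G) w; rewrite exprMn; lra.
Qed.

Lemma grad_l6_le : grad_lq h M 6 v <=
  2 * G `^ (1 / 3) * (16 * q ^+ 2 + 1 / L ^+ 2 * G ^+ 2) `^ (1 / 3).
Proof.
have uE : 1 / L ^+ 2 * G ^+ 2 = (G / L) ^+ 2 by rewrite expr_div_n div1r mulrC.
have Y_ge0 : 0 <= 16 * q ^+ 2 + 1 / L ^+ 2 * G ^+ 2.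
  by rewrite uE; have := sqr_ge0 q; have := sqr_ge0 (G / L); lra.
rewrite grad_lqE; apply: powR_invn_le => //.
- apply: mulr_ge0; first exact: sqr_ge0.
  by apply: gridsum_ge0 => i j; apply/exprn_ge0/sqrtr_ge0.
- by rewrite !mulr_ge0 ?powR_ge0.
have G6 : (G `^ (1 / 3)) ^+ 6 = G ^+ 2.
  by rewrite (div1r (3 : R)) (exprM _ 3 2) powR_invnK.
have Y6 : ((16 * q ^+ 2 + 1 / L ^+ 2 * G ^+ 2) `^ (1 / 3)) ^+ 6 =
          (16 * q ^+ 2 + 1 / L ^+ 2 * G ^+ 2) ^+ 2.
  by rewrite (div1r (3 : R)) (exprM _ 3 2) powR_invnK.
rewrite !exprMn G6 Y6.
apply: le_trans gridsum_grad6_le _; rewrite uE; set u := G / L.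
have w : (u + 3 * q) ^+ 2 <= 2 * (16 * q ^+ 2 + u ^+ 2).
  by have := sqr_ge0 (u - 3 * q); have := sqr_ge0 q; lra.
have w2 : ((u + 3 * q) ^+ 2) ^+ 2 <= (2 * (16 * q ^+ 2 + u ^+ 2)) ^+ 2.
  by apply: lerXn2r; rewrite ?nnegrE ?sqr_ge0 // (le_trans _ w) ?sqr_ge0.
have := ler_wpM2l (sqr_ge0 G) w2.
have := mulr_ge0 (sqr_ge0 G) (sqr_ge0 (16 * q ^+ 2 + u ^+ 2)).
rewrite !exprMn; lra.
Qed.

End Gradient.

Theorem lemma3p5 (R : realType) (L : R) (hL : 0 < L) :
  exists K1 K2 : R, 0 < K1 /\ 0 < K2 /\
  forall (M : nat) (v : int -> int -> R),
    (0 < M)%N -> periodic M v ->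
    let h := L / M%:R in
    grad_lq h M 4 v <=
      K1 * powR (grad_lq h M 2 v) (1 / 2)
         * powR (2 * l2norm h M (lap_h h v) ^+ 2
                 + 1 / L ^+ 2 * grad_lq h M 2 v ^+ 2) (1 / 4)
    /\
    grad_lq h M 6 v <=
      K2 * powR (grad_lq h M 2 v) (1 / 3)
         * powR (16 * l2norm h M (lap_h h v) ^+ 2
                 + 1 / L ^+ 2 * grad_lq h M 2 v ^+ 2) (1 / 3).
Proof.
exists 2, 2; split; first lra; split; first lra.
move=> M v M_gt0 pv h.
have M_pos : 0 < M%:R :> R by rewrite ltr0n.
have h_gt0 : 0 < h by rewrite divr_gt0.
have MhL : M%:R * h = L by rewrite mulrC divfK ?gt_eqF.
by split; [apply: grad_l4_le | apply: grad_l6_le].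
Qed.
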